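(* In the unramified minimax setting below, with $\Sigma_{m,n}=\mathrm{diag}(\varpi_\mathrm{F}^{(m+1)(n-1)},\varpi_\mathrm{F}^{(m+1)(n-2)},\dots,\varpi_\mathrm{F}^{m+1},1)$ and $\mathrm{K}':=\Sigma_{m,n}\mathrm{K}_n(n(m+1))\Sigma_{m,n}^{-1}$, we have: (1) $\mathrm{H}^1\cap\mathrm{K}'=\mathrm{U}^{\lfloor m/2\rfloor+1}\cap\mathrm{K}'$; (2) $(\mathrm{U}_n\cap\mathrm{J}^1)\mathrm{H}^1\cap\mathrm{K}'=(\mathrm{U}_n\cap\mathrm{U}^{\lfloor (m+1)/2\rfloor})\mathrm{U}^{\lfloor m/2\rfloor+1}\cap\mathrm{K}'$; (3) $\mathbf{J}\cap\mathrm{K}'=\mathrm{J}^1\cap\mathrm{K}'$.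
   Context: $\mathrm{F}$ non-archimedean local field, $\mathfrak{o}_\mathrm{F}$, $\mathfrak{p}_\mathrm{F}=\varpi_\mathrm{F}\mathfrak{o}_\mathrm{F}$, residue field $k_\mathrm{F}$; $n\geqslant2$. $\mathrm{K}_n=\mathrm{GL}_n(\mathfrak{o}_\mathrm{F})$, $\mathrm{K}_n(N)=\{\left(\begin{smallmatrix}a&b\\c&d\end{smallmatrix}\right)\in\mathrm{K}_n: c\in\mathrm{M}_{1\times(n-1)}(\mathfrak{p}_\mathrm{F}^N),\ d\in1+\mathfrak{p}_\mathrm{F}^N\}$. $\mathrm{U}_n$: upper unitriangular subgroup of $\mathrm{GL}_n(\mathrm{F})$. Unramified minimax setting: $m\geqslant1$ is an integer, $\mathrm{E}/\mathrm{F}$ an unramified extension of degree $n$ and $\beta\in\mathrm{E}$ with $\mathrm{E}=\mathrm{F}[\beta]$, $\nu_\mathrm{E}(\beta)=-m$, and $\varpi_\mathrm{F}^m\beta+\mathfrak{p}_\mathrm{E}$ generating $k_\mathrm{E}$ over $k_\mathrm{F}$. Let $X^n+a_{n-1}X^{n-1}+\dots+a_0$ be the minimal polynomial of $\beta$. Identify $\mathrm{E}$ with $\mathrm{F}^n$ via the basis $\{\varpi_\mathrm{F}^{km}\beta^k:0\leqslant k\leqslant n-1\}$, so $\mathrm{E}\subset\mathrm{M}_n(\mathrm{F})$, $\mathfrak{o}_\mathrm{E}\subset\mathrm{M}_n(\mathfrak{o}_\mathrm{F})$, $\mathfrak{p}_\mathrm{E}=\varpi_\mathrm{F}\mathfrak{o}_\mathrm{E}$,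 and $$\beta=\begin{pmatrix}&&&-\varpi_\mathrm{F}^{(n-1)m}a_0\\ \varpi_\mathrm{F}^{-m}&&&-\varpi_\mathrm{F}^{(n-2)m}a_1\\ &\ddots&&\vdots\\ &&\varpi_\mathrm{F}^{-m}&-a_{n-1}\end{pmatrix}.$$ For $r\geqslant1$ let $\mathrm{U}^r=1+\mathrm{M}_n(\mathfrak{p}_\mathrm{F}^r)$. Define $\mathrm{H}^1=(1+\mathfrak{p}_\mathrm{E})\mathrm{U}^{\lfloor m/2\rfloor+1}$, $\mathrm{J}^1=(1+\mathfrak{p}_\mathrm{E})\mathrm{U}^{\lfloor (m+1)/2\rfloor}$, and $\mathbf{J}=\mathrm{E}^\times\mathrm{U}^{\lfloor (m+1)/2\rfloor}$. *)

From HB Require Import structures.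
From mathcomp Require Import all_boot all_order all_algebra all_field.
Set Implicit Arguments. Unset Strict Implicit. Unset Printing Implicit Defensive.
Import Order.TTheory GRing.Theory Num.Theory.
Local Open Scope ring_scope.

Definition is_dval (K : fieldType) (v : K -> int) : Prop :=
  (forall x y, x != 0 -> y != 0 -> v (x * y) = v x + v y) /\
  (forall x y, x != 0 -> y != 0 -> x + y != 0 -> Num.min (v x) (v y) <= v (x + y)).

(* x \in p^r  (r : int);  0 lies in every p^r *)
Definition inP (K : fieldType) (v : K -> int) (r : int) (x : K) : Prop :=
  x = 0 \/ r <= v x.
Definition inO (K : fieldType) (v : K -> int) (x : K) : Prop := inP v 0 x.

Definition v_complete (K : fieldType) (v : K -> int) : Prop :=
  forall u : nat -> K,
    (forall N : int, exists M, forall i j, (M <= i)%N -> (M <= j)%N -> inP v N (u i - u j)) ->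
    exists l, forall N : int, exists M, forall i, (M <= i)%N -> inP v N (u i - l).

Definition finite_residue (K : fieldType) (v : K -> int) : Prop :=
  exists s : seq K, (forall y, y \in s -> inO v y) /\
    forall x, inO v x -> exists2 y, y \in s & inP v 1 (x - y).

(* non-archimedean local field: complete, discretely valued, finite residue field;
   normalized by the existence of a uniformizer (supplied separately) *)
Definition nonarch_local_field (F : fieldType) (v : F -> int) : Prop :=
  [/\ is_dval v, v_complete v & finite_residue v].

Definition Ebasis (F : fieldType) (E : fieldExtType F) (n m : nat) (w : F) (beta : E)
  : n.-tuple E := [tuple ((w ^+ (i * m))%:A * beta ^+ i) | i < n].

Definition Emat (F : fieldType) (E : fieldExtType F) (n m : nat) (w : F) (beta : E)
  (x : E) : 'M[F]_n :=
  \matrix_(i < n, j < n)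
     coord (Ebasis n m w beta) i (x * tnth (Ebasis n m w beta) j).

Section Groups.
Variables (F : fieldType) (v : F -> int) (n : nat).

Definition Ur (r : nat) (g : 'M[F]_n) : Prop :=
  forall i j, inP v r%:Z ((g - 1%:M) i j).

Definition Un (g : 'M[F]_n) : Prop :=
  forall i j : 'I_n, (g i i = 1) /\ ((j < i)%N -> g i j = 0).

Definition Kn (g : 'M[F]_n) : Prop :=
  (forall i j, inO v (g i j)) /\ \det g != 0 /\ v (\det g) = 0.

Definition KnN (N : nat) (g : 'M[F]_n) : Prop :=
  Kn g /\
  (forall i j : 'I_n, (i : nat) = n.-1 -> (j < n.-1)%N -> inP v N%:Z (g i j)) /\
  (forall i : 'I_n, (i : nat) = n.-1 -> inP v N%:Z (g i i - 1)).

Definition Sigma (w : F) (m : nat) : 'M[F]_n :=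
  \matrix_(i < n, j < n) (if i == j then w ^+ ((m + 1) * (n.-1 - i)) else 0).

Definition Kprime (w : F) (m : nat) (g : 'M[F]_n) : Prop :=
  exists k, KnN (n * (m + 1)) k /\ g = Sigma w m *m k *m invmx (Sigma w m).
End Groups.

Section EGroups.
Variables (F : fieldType) (E : fieldExtType F) (v : F -> int) (vE : E -> int)
          (n m : nat) (w : F) (beta : E).
Local Notation M := (Emat n m w beta).

Definition OnePE (g : 'M[F]_n) : Prop := exists x : E, inP vE 1 (x - 1) /\ g = M x.
Definition Etimes (g : 'M[F]_n) : Prop := exists x : E, x != 0 /\ g = M x.

Definition H1 (g : 'M[F]_n) : Prop :=
  exists e u, OnePE e /\ Ur v (m./2 + 1) u /\ g = e *m u.
Definition J1 (g : 'M[F]_n) : Prop :=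
  exists e u, OnePE e /\ Ur v (m.+1)./2 u /\ g = e *m u.
Definition Jbold (g : 'M[F]_n) : Prop :=
  exists e u, Etimes e /\ Ur v (m.+1)./2 u /\ g = e *m u.
End EGroups.

From HB Require Import structures.
From mathcomp Require Import all_boot all_order all_algebra all_field.
From Stdlib Require Import ClassicalEpsilon.
From mathcomp Require Import zify.
Import Order.TTheory GRing.Theory Num.Theory.
Local Open Scope ring_scope.
Set Implicit Arguments. Unset Strict Implicit. Unset Printing Implicit Defensive.

(* Put pi := w^m beta, a unit of o_E whose residue generates k_E.  Since E/F is
   unramified and F is complete, 1, pi, ..., pi^(n-1) is an o_F-basis of o_E
   adapted to the filtration: x lies in p_E^t iff all its coordinates lie in
   p_F^t.  For a unit x some x pi^j has a unit last coordinate, so x lies in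
   p_E^t as soon as the last row of its matrix does, and a right factor in U^1
   does not disturb this.  An element of K' is congruent to 1 modulo p_F^(m+1)
   along its last row, so in a factorization g = x u with u in U^r, r <= m+1,
   we get x in 1 + p_E^r; this gives (1) and (3).  In (2) the U_n-factor does
   not change the last row, and the E-part of an element of U_n cap J^1 is read
   off its first column, which is that of the identity. *)

Section Valuation.
Variables (K : fieldType) (v : K -> int).
Hypothesis Hv : is_dval v.

Lemma dvalM x y : x != 0 -> y != 0 -> v (x * y) = v x + v y.
Proof. exact: Hv.1. Qed.

Lemma dval1 : v 1 = 0.
Proof.
have := dvalM (oner_neq0 K) (oner_neq0 K); rewrite mulr1 => h.
by apply/eqP; rewrite -(subrr (v 1)) {2}h addrK.
Qed.

Lemma dvalN x : v (- x) = v x.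
Proof.
have N10 : (-1 : K) != 0 by rewrite oppr_eq0 oner_neq0.
have vN1 : v (-1) = 0.
  have := dvalM N10 N10; rewrite mulrNN mulr1 dval1 => /eqP.
  by rewrite eq_sym -mulr2n -mulr_natl mulf_eq0 /= => /eqP.
have [->|x0] := eqVneq x 0; first by rewrite oppr0.
by rewrite -mulN1r dvalM // vN1 add0r.
Qed.

Lemma dvalV x : x != 0 -> v x^-1 = - v x.
Proof.
move=> x0; have := dvalM x0 (invr_neq0 x0); rewrite mulfV // dval1 => /eqP.
by rewrite eq_sym addrC addr_eq0 => /eqP.
Qed.

Lemma dvalX x k : x != 0 -> v (x ^+ k) = k%:Z * v x.
Proof.
move=> x0; elim: k => [|k IH]; first by rewrite expr0 dval1 mul0r.
by rewrite exprS dvalM ?expf_neq0 // IH intS mulrDl mul1r.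
Qed.

Lemma inPP r a : reflect (inP v r a) ((a == 0) || (r <= v a)).
Proof.
by apply: (iffP orP) => [[/eqP ->|h]|[->|h]]; [left|right|left; rewrite eqxx|right].
Qed.

Lemma inP0 r : inP v r 0. Proof. by left. Qed.

Lemma inPW r s a : r <= s -> inP v s a -> inP v r a.
Proof. by move=> rs [->|h]; [left|right; apply: le_trans h]. Qed.

Lemma inPD r a b : inP v r a -> inP v r b -> inP v r (a + b).
Proof.
move=> [->|ha]; first by rewrite add0r.
move=> [->|hb]; first by rewrite addr0; right.
have [->|a0] := eqVneq a 0; first by rewrite add0r; right.
have [->|b0] := eqVneq b 0; first by rewrite addr0; right.
have [->|ab0] := eqVneq (a + b) 0; first by left.
by right; apply: le_trans (Hv.2 a b a0 b0 ab0); rewrite le_min ha hb.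
Qed.

Lemma inPN r a : inP v r a -> inP v r (- a).
Proof. by move=> [->|h]; [left; rewrite oppr0|right; rewrite dvalN]. Qed.

Lemma inPB r a b : inP v r a -> inP v r b -> inP v r (a - b).
Proof. by move=> ha hb; apply: inPD => //; apply: inPN. Qed.

Lemma inP_sum r (I : Type) (s : seq I) (P : pred I) (f : I -> K) :
  (forall i, P i -> inP v r (f i)) -> inP v r (\sum_(i <- s | P i) f i).
Proof. by move=> h; apply: (big_ind (inP v r)); [apply: inP0|apply: inPD|]. Qed.

Lemma inPM r s a b : inP v r a -> inP v s b -> inP v (r + s) (a * b).
Proof.
move=> [->|ha]; first by rewrite mul0r; left.
move=> [->|hb]; first by rewrite mulr0; left.
have [->|a0] := eqVneq a 0; first by rewrite mul0r; left.
have [->|b0] := eqVneq b 0; first by rewrite mulr0; left.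
by right; rewrite dvalM // lerD.
Qed.

Lemma inOM a b : inO v a -> inO v b -> inO v (a * b).
Proof. by move=> ha hb; have := inPM ha hb; rewrite addr0. Qed.

Lemma inO1 : inO v 1. Proof. by right; rewrite dval1. Qed.

Lemma inO_of_sub1 r a : 0 <= r -> inP v r (a - 1) -> inO v a.
Proof. by move=> r0 h; rewrite -[a](subrK 1); apply: inPD (inPW r0 h) inO1. Qed.

Lemma inP_val r a : inP v r a -> a != 0 -> r <= v a.
Proof. by move=> [->|h]; [rewrite eqxx|]. Qed.

Lemma not_inP1 r : 0 < r -> ~ inP v r 1.
Proof.
move=> r0 [/eqP|h]; first by rewrite oner_eq0.
by move: h; rewrite dval1 leNgt r0.
Qed.

Lemma not_inPN1 r : 0 < r -> ~ inP v r (-1).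
Proof. by move=> r0 /inPN; rewrite opprK; apply: not_inP1. Qed.

Lemma unit_val a : inO v a -> ~ inP v 1 a -> a != 0 /\ v a = 0.
Proof.
move=> [->|ha] hn; first by case: hn; left.
have a0 : a != 0 by apply: contra_notN hn => /eqP ->; left.
have : ~ (1 <= v a) by move=> h; apply: hn; right.
by split=> //; move: ha => /=; lia.
Qed.

Lemma inP_eq0 a : (forall N : nat, inP v N%:Z a) -> a = 0.
Proof.
move=> h; apply/eqP/negPn/negP => a0.
by have := inP_val (h `|v a|.+1) a0; lia.
Qed.

Lemma exists_val w t : w != 0 -> v w = 1 -> exists2 s, s != 0 & v s = t.
Proof.
move=> w0 vw; case: t => k.
  by exists (w ^+ k); rewrite ?expf_neq0 // dvalX // vw mulr1.
exists (w ^+ k.+1)^-1; rewrite ?invr_neq0 ?expf_neq0 // dvalV ?expf_neq0 //.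
by rewrite dvalX // vw mulr1 NegzE.
Qed.

End Valuation.

Lemma v_complete_lim (K : fieldType) (v : K -> int) (c : nat -> K) :
  is_dval v -> v_complete v ->
  (forall N d : nat, inP v N%:Z (c (N + d)%N - c N)) ->
  exists l, forall N j : nat, (N <= j)%N -> inP v N%:Z (c j - l).
Proof.
move=> Hv Hcomp cauchy.
have cauchy' N j : (N <= j)%N -> inP v N%:Z (c j - c N).
  by move=> /subnKC <-; apply: cauchy.
have [l hl] : exists l, forall N : int, exists M,
    forall i, (M <= i)%N -> inP v N (c i - l).
  apply: Hcomp => N; exists `|N|%N => i j hi hj.
  have -> : c i - c j = (c i - c `|N|%N) - (c j - c `|N|%N) by rewrite opprB addrA subrK.
  apply: inPW (inPB Hv (cauchy' _ _ hi) (cauchy' _ _ hj)).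
  by rewrite abszE; exact: ler_norm.
exists l => N j hj; have [M hM] := hl N.
have -> : c j - l = (c (maxn M j) - l) - (c (maxn M j) - c j).
  by rewrite opprB [RHS]addrC addrA subrK.
apply: (inPB Hv (hM _ (leq_maxl M j))).
by apply: inPW (cauchy' _ _ (leq_maxr _ _)); rewrite lez_nat.
Qed.

Lemma half_bounds m : (1 <= m)%N ->
  [/\ (m./2 + 1 <= m + 1)%N, (1 <= m.+1./2)%N & (1 <= m./2 + 1)%N].
Proof.
move=> m_gt0; have h1 := odd_double_half m; have h2 := odd_double_half m.+1.
rewrite -addnn in h1; rewrite -addnn in h2.
have b1 := leq_b1 (odd m); have b2 := leq_b1 (odd m.+1).
by split; lia.
Qed.

Section MatrixValuation.
Variables (F : fieldType) (v : F -> int) (n : nat).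
Hypothesis Hv : is_dval v.

Definition mx_inP (r : int) (A : 'M[F]_n) := forall i j, inP v r (A i j).

Lemma mx_inPM r s A B : mx_inP r A -> mx_inP s B -> mx_inP (r + s) (A *m B).
Proof.
by move=> hA hB i j; rewrite mxE; apply: (inP_sum Hv) => k _; apply: inPM.
Qed.

Lemma mx_inPD r A B : mx_inP r A -> mx_inP r B -> mx_inP r (A + B).
Proof. by move=> hA hB i j; rewrite mxE; apply: inPD. Qed.

Lemma mx_inPW r s A : r <= s -> mx_inP s A -> mx_inP r A.
Proof. by move=> rs h i j; apply: inPW (h i j). Qed.

Lemma mx_inP_mul_sub1 r a b : mx_inP 0 a ->
  mx_inP r (a - 1%:M) -> mx_inP r (b - 1%:M) -> mx_inP r (a *m b - 1%:M).
Proof.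
move=> a0 ha hb.
have -> : a *m b - 1%:M = a *m (b - 1%:M) + (a - 1%:M).
  by rewrite mulmxBr mulmx1 addrA subrK.
by apply: mx_inPD => //; have := mx_inPM a0 hb; rewrite add0r.
Qed.

Lemma UrW r s (u : 'M[F]_n) : (r <= s)%N -> Ur v s u -> Ur v r u.
Proof. by move=> rs h; apply: mx_inPW h; rewrite lez_nat. Qed.

Lemma Ur_diag_neq0 r (u : 'M[F]_n) i : (1 <= r)%N -> Ur v r u -> u i i != 0.
Proof.
move=> r_gt0 hu; apply/eqP => u0; have := hu i i; rewrite !mxE u0 eqxx mulr1n sub0r.
by apply: (not_inPN1 Hv); rewrite ltz_nat.
Qed.

End MatrixValuation.

Section LastRow.
Variables (F : fieldType) (v : F -> int) (n : nat).
Hypotheses (Hv : is_dval v) (n_gt0 : (0 < n)%N).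

Lemma predn_lt : (n.-1 < n)%N. Proof. by rewrite ltn_predL. Qed.

Definition ifirst : 'I_n := Ordinal n_gt0.
Definition ilast : 'I_n := Ordinal predn_lt.

Lemma Un_last_row (a h : 'M[F]_n) j : Un a ->
  (a *m h - 1%:M) ilast j = (h - 1%:M) ilast j.
Proof.
move=> Ua; rewrite !mxE (bigD1 ilast) //= (Ua ilast ilast).1 mul1r big1 ?addr0 //.
move=> k; rewrite -val_eqE /= => kl; rewrite (Ua ilast k).2 ?mul0r //.
by change (k < n.-1)%N; rewrite ltn_neqAle kl -ltnS prednK ?ltn_ord.
Qed.

Lemma Un_first_col (a : 'M[F]_n) i : Un a -> (a - 1%:M) i ifirst = 0.
Proof.
move=> Ua; rewrite !mxE; case: (eqVneq i ifirst) => [->|i0].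
  by rewrite (Ua ifirst ifirst).1 subrr.
rewrite (Ua i ifirst).2 ?(negPf i0) ?subrr // lt0n.
by move: i0; rewrite -val_eqE.
Qed.

Lemma Un1 : Un (1%:M : 'M[F]_n).
Proof. by move=> i j; rewrite !mxE eqxx; split=> // ij; rewrite -val_eqE gtn_eqF. Qed.

Lemma Un_unitmx (a : 'M[F]_n) : Un a -> a \in unitmx.
Proof.
move=> Ua; rewrite unitmxE -det_tr det_trig.
  by rewrite big1 ?unitr1 // => i _; rewrite mxE (Ua i i).1.
by apply/is_trig_mxP => i j ij; rewrite mxE (Ua j i).2.
Qed.

Lemma Sigma_diag (w : F) m :
  Sigma n w m = diag_mx (\row_(i < n) w ^+ ((m + 1) * (n.-1 - i))).
Proof.
apply/matrixP => i j; rewrite !mxE; case: (eqVneq i j) => [->|ij].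
  by rewrite ?eqxx ?mulr1n.
by rewrite ?(negPf ij) ?mulr0n.
Qed.

(* [g Sigma = Sigma k]: on the last row, Sigma contributes [1] on the left and
   [w ^ ((m + 1) (n - 1 - j))] on the right, which the congruence of [k] in
   [K_n(n (m + 1))] more than compensates. *)
Lemma Kprime_last_row (w : F) m g : w != 0 -> v w = 1 -> Kprime v w m g ->
  forall j, inP v (m + 1)%N ((g - 1%:M) ilast j).
Proof.
move=> w0 vw [k [[_ [k_row k_last]] ->]] j.
set S := Sigma n w m.
have S_unit : S \in unitmx.
  rewrite unitmxE /S Sigma_diag det_diag unitfE; apply/prodf_neq0 => i _.
  by rewrite mxE expf_neq0.
set G := S *m k *m invmx S.
have g_lastE : G ilast j * w ^+ ((m + 1) * (n.-1 - j)) = k ilast j.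
  have := congr1 (fun A : 'M[F]_n => A ilast j) (mulmxKV S_unit (S *m k)).
  by rewrite -/G /S Sigma_diag mul_mx_diag mul_diag_mx !mxE /= subnn muln0 expr0 mul1r.
clearbody G; rewrite !mxE; move: g_lastE.
case: (eqVneq ilast j) => [<-|lj] g_lastE.
  move: g_lastE; rewrite /= subnn muln0 expr0 mulr1 => ->.
  by apply: inPW (k_last ilast erefl); rewrite lez_nat leq_pmull.
have j_lt : (j < n.-1)%N.
  by rewrite ltn_neqAle eq_sym -ltnS prednK // (ltn_ord j) andbT; move: lj; rewrite -val_eqE.
rewrite subr0.
have [->|g0] := eqVneq (G ilast j) 0; first by left.
have k0 : k ilast j != 0 by rewrite -g_lastE mulf_neq0 // expf_neq0.
right; have := inP_val (k_row ilast j erefl j_lt) k0.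
rewrite -g_lastE dvalM ?expf_neq0 // dvalX // vw mulr1.
have : ((m + 1) * (n.-1 - j) + (m + 1) <= n * (m + 1))%N.
  by rewrite -mulnSr mulnC leq_pmul2r ?addn1 //; lia.
by move: ((m + 1) * _)%N (n * _)%N (v _) => a b x; lia.
Qed.

(* For [w = 0], [Sigma] is singular, so [invmx Sigma = Sigma] and [K'] collapses. *)
Lemma Kprime_w0 m g : (1 < n)%N -> Kprime v 0 m g ->
  (forall i, g i ifirst = 0) /\ g ilast ilast != 0.
Proof.
move=> n_gt1 [k [[_ [_ k_last]] ->]].
set S := Sigma n 0 m.
have first0 : (0 : F) ^+ ((m + 1) * (n.-1 - ifirst)) = 0.
  by rewrite expr0n muln_eq0 addn1 subn0 -subn1 subn_eq0 leqNgt n_gt1.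
have S_sing : S \notin unitmx.
  by rewrite unitmxE /S Sigma_diag det_diag unitfE negbK (bigD1 ifirst) //= mxE first0 mul0r.
have gE i j : (S *m k *m S) i j =
    0 ^+ ((m + 1) * (n.-1 - i)) * k i j * 0 ^+ ((m + 1) * (n.-1 - j)).
  by rewrite /S Sigma_diag mul_mx_diag mxE mul_diag_mx !mxE.
rewrite /invmx (negPf S_sing); split=> [i|]; first by rewrite gE first0 mulr0.
rewrite gE subnn muln0 expr0 mul1r mulr1; apply/eqP => k0.
have := k_last ilast erefl; rewrite k0 sub0r.
by apply: (not_inPN1 Hv); rewrite ltz_nat muln_gt0 addn1 andbT.
Qed.

End LastRow.

Section EmbeddingMatrix.
Variables (F : fieldType) (E : fieldExtType F) (n m : nat) (w : F) (beta : E).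

Lemma Ebasis_tnth (i : 'I_n) :
  tnth (Ebasis n m w beta) i = ((w ^+ m)%:A * beta) ^+ i.
Proof.
rewrite tnth_mktuple exprMn; congr (_ * _).
by rewrite exprZn expr1n -exprM mulnC.
Qed.

Lemma Emat_coord x i (j : 'I_n) : Emat n m w beta x i j =
  coord (Ebasis n m w beta) i (x * ((w ^+ m)%:A * beta) ^+ j).
Proof. by rewrite mxE Ebasis_tnth. Qed.

End EmbeddingMatrix.

Definition minimax_intersections (F : fieldType) (E : fieldExtType F) (v : F -> int)
    (vE : E -> int) (n m : nat) (w : F) (beta : E) : Prop :=
  (forall g : 'M[F]_n,
     (H1 v vE m w beta g /\ Kprime v w m g) <-> (Ur v (m./2 + 1) g /\ Kprime v w m g)) /\
  (forall g : 'M[F]_n,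
     ((exists a h, (Un a /\ J1 v vE m w beta a) /\ H1 v vE m w beta h /\ g = a *m h)
        /\ Kprime v w m g) <->
     ((exists a u, (Un a /\ Ur v (m.+1)./2 a) /\ Ur v (m./2 + 1) u /\ g = a *m u)
        /\ Kprime v w m g)) /\
  (forall g : 'M[F]_n,
     (Jbold v m w beta g /\ Kprime v w m g) <-> (J1 v vE m w beta g /\ Kprime v w m g)).

Section UnramifiedMinimax.
Variables (F : fieldType) (v : F -> int) (w : F) (E : fieldExtType F)
  (vE : E -> int) (n m : nat) (beta : E).
Hypotheses (Hv : is_dval v) (Hcomp : v_complete v) (Hw : v w = 1) (Hw0 : w != 0)
  (HdimE : \dim {: E} = n) (HvE : is_dval vE)
  (HvEc : forall c : F, c != 0 -> vE c%:A = v c)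
  (Hgen : (<< 1%VS; beta >>)%VS = fullv) (Hb0 : beta != 0)
  (Hvb : vE beta = - (m%:Z)) (n_gt0 : (0 < n)%N) (m_gt0 : (0 < m)%N)
  (Hres : forall x : E, inO vE x -> exists s : seq F, (forall c, c \in s -> inO v c) /\
      inP vE 1 (x - \sum_(i < size s) (s`_i)%:A * ((w ^+ m)%:A * beta) ^+ i)).

Local Notation pi := ((w ^+ m)%:A * beta).
Local Notation X := (Ebasis n m w beta).
Local Notation cd i x := (coord X i x).
Local Notation lst := (ilast n_gt0).

Lemma alg_neq0 (c : F) : c != 0 -> c%:A != 0 :> E.
Proof. by move=> c0; rewrite scaler_eq0 negb_or c0 oner_neq0. Qed.

Lemma dval_pi : vE pi = 0.
Proof.
rewrite dvalM ?alg_neq0 ?expf_neq0 // HvEc ?expf_neq0 //.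
by rewrite dvalX // Hw mulr1 Hvb subrr.
Qed.

Lemma pi_neq0 : pi != 0.
Proof. by rewrite mulf_neq0 // alg_neq0 // expf_neq0. Qed.

Lemma inO_piX i : inO vE (pi ^+ i).
Proof. by right; rewrite dvalX ?pi_neq0 // dval_pi mulr0. Qed.

Lemma inP_wX k : inP v k%:Z (w ^+ k).
Proof. by right; rewrite dvalX // Hw mulr1. Qed.

Lemma inPZ r s (c : F) (y : E) : inP v r c -> inP vE s y -> inP vE (r + s) (c *: y).
Proof.
move=> hc hy; rewrite -mulr_algl; apply: inPM hy => //.
case: hc => [->|hc]; first by rewrite scale0r; left.
have [->|c0] := eqVneq c 0; first by rewrite scale0r; left.
by right; rewrite HvEc.
Qed.

Lemma Ebasis_nth (i : 'I_n) : X`_i = pi ^+ i.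
Proof. by rewrite -(tnth_nth 0) Ebasis_tnth. Qed.

Lemma adjoin_degree_pi : adjoin_degree 1%AS pi = n.
Proof.
have gen_pi : (<<1%AS; pi>>)%VS = fullv.
  apply/eqP; rewrite eqEsubv subvf /= -Hgen sub_adjoin1v.
  rewrite [X in X \in _](_ : beta = (w ^+ m)^-1 *: pi) ?memvZ ?memv_adjoin //.
  by rewrite -scalerAl scalerA mulVf ?expf_neq0 // scale1r mul1r.
by have := dim_Fadjoin 1%AS pi; rewrite gen_pi HdimE /= dimv1 muln1.
Qed.

Lemma free_Ebasis : free X.
Proof.
apply/freeP => k hk i.
pose p : {poly E} := \poly_(j < n) (k (insubd i j))%:A.
have pO : p \is a polyOver 1%AS.
  apply/polyOverP => j; rewrite coef_poly; case: ifP => _; last exact: mem0v.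
  by rewrite memvZ // mem1v.
have : root p pi.
  apply/rootP; rewrite horner_poly -[RHS]hk; apply: eq_bigr => j _.
  by rewrite valKd Ebasis_nth; exact: mulr_algl.
rewrite (@root_small_adjoin_poly _ _ 1%AS) ?adjoin_degree_pi ?size_poly //.
move=> /eqP /polyP /(_ i); rewrite coef_poly ltn_ord valKd coef0 => /eqP.
by rewrite scaler_eq0 oner_eq0 orbF => /eqP.
Qed.

Lemma coord_expand x : x = \sum_i cd i x *: pi ^+ i.
Proof.
have basisX : basis_of fullv X.
  by rewrite basisEfree free_Ebasis subvf size_tuple HdimE leqnn.
rewrite {1}(coord_basis basisX (memvf x)); apply: eq_bigr => i _.
by rewrite Ebasis_nth.
Qed.

Lemma coord_comb (k : 'I_n -> F) j : cd j (\sum_i k i *: pi ^+ i) = k j.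
Proof.
rewrite -(coord_sum_free k j free_Ebasis); congr coord; apply: eq_bigr => i _.
by rewrite Ebasis_nth.
Qed.

Lemma coord_piX (i j : 'I_n) : cd j (pi ^+ i) = (i == j)%:R.
Proof. by rewrite -Ebasis_nth coord_free // free_Ebasis. Qed.

Lemma inP_of_coord (t : int) x : (forall i, inP v t (cd i x)) -> inP vE t x.
Proof.
move=> h; rewrite (coord_expand x); apply: (inP_sum HvE) => i _.
by rewrite -[t]addr0; apply: inPZ => //; apply: inO_piX.
Qed.

Definition in_lat k y :=
  forall i : 'I_n, inO v (cd i y) /\ ((k <= i)%N -> cd i y = 0).

Definition approx_lat k x := exists2 y, in_lat k y & inP vE 1 (x - y).

Lemma approx_lat0 k : approx_lat k 0.
Proof. by exists 0; [move=> i; rewrite linear0; split=> //; left|rewrite subrr; left]. Qed.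

Lemma approx_lat_congr k x z : approx_lat k z -> inP vE 1 (x - z) -> approx_lat k x.
Proof.
move=> [y hy hz] hx; exists y => //.
by rewrite -(subrK z x) -addrA; apply: (inPD HvE).
Qed.

Lemma approx_lat_piX k i : (i < k)%N -> (k <= n)%N -> approx_lat k (pi ^+ i).
Proof.
move=> ik kn; exists (pi ^+ i); last by rewrite subrr; left.
move=> j; have iN : (i < n)%N := leq_trans ik kn.
rewrite -[i]/(Ordinal iN : nat) coord_piX; split.
  by case: eqP => _; [exact: (inO1 Hv)|left].
by case: eqP => [<-|//]; rewrite leqNgt ik.
Qed.

Lemma approx_latD k x1 x2 : approx_lat k x1 -> approx_lat k x2 -> approx_lat k (x1 + x2).
Proof.
move=> [y1 h1 e1] [y2 h2 e2]; exists (y1 + y2); last first.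
  by rewrite opprD addrACA; apply: (inPD HvE).
move=> i; rewrite linearD /=; have [o1 z1] := h1 i; have [o2 z2] := h2 i.
by split=> [|ki]; [apply: (inPD Hv)|rewrite z1 // z2 // addr0].
Qed.

Lemma approx_latZ k c x : inO v c -> approx_lat k x -> approx_lat k (c *: x).
Proof.
move=> hc [y hy e]; exists (c *: y); last first.
  by rewrite -scalerBr; have := inPZ hc e; rewrite add0r.
move=> i; rewrite linearZ /=; have [o z] := hy i.
by split=> [|ki]; [apply: (inOM Hv)|rewrite z // mulr0].
Qed.

Lemma approx_lat_sum k (I : Type) (s : seq I) (P : pred I) (f : I -> E) :
  (forall i, P i -> approx_lat k (f i)) -> approx_lat k (\sum_(i <- s | P i) f i).
Proof.
by move=> h; apply: (big_ind (approx_lat k)); [apply: approx_lat0|apply: approx_latD|].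
Qed.

(* Residues of integral elements are polynomials in the residue of [pi], so a
   congruence for [pi ^ k] propagates to the whole of [o_E]. *)
Lemma approx_lat_all k : (k <= n)%N -> approx_lat k (pi ^+ k) ->
  forall x, inO vE x -> approx_lat k x.
Proof.
move=> kn hk.
have low i : (i <= k)%N -> approx_lat k (pi ^+ i).
  by rewrite leq_eqVlt => /orP[/eqP ->|ik] //; apply: approx_lat_piX.
have powers j : approx_lat k (pi ^+ j).
  elim: j => [|j [y hy e]]; first exact: low.
  apply: (@approx_lat_congr _ _ (pi * y)); last first.
    by rewrite exprS -mulrBr; have := inPM HvE (inO_piX 1) e; rewrite expr1 add0r.
  rewrite (coord_expand y) mulr_sumr; apply: approx_lat_sum => i _.
  have [o z] := hy i; rewrite -scalerAr -exprS.
  have [ik|ki] := ltnP i k; first exact: approx_latZ (low _ ik).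
  by rewrite z // scale0r; apply: approx_lat0.
move=> x hx; have [s [hs hxs]] := Hres hx.
apply: approx_lat_congr hxs; apply: approx_lat_sum => i _.
by rewrite mulr_algl; apply: approx_latZ (powers i); apply: hs; apply: mem_nth.
Qed.

Lemma coord_inj x y : (forall i, cd i x = cd i y) -> x = y.
Proof.
by move=> h; rewrite (coord_expand x) (coord_expand y); apply: eq_bigr => i _; rewrite h.
Qed.

(* Successive approximation: [x = y N + w ^ N x_N] with [x_N] integral,
   each step dividing the error of the previous approximation by [w]. *)
Lemma approx_expansion k : (forall z, inO vE z -> approx_lat k z) ->
  forall x, inO vE x -> exists y : nat -> E,
  [/\ forall N (i : 'I_n), (k <= i)%N -> cd i (y N) = 0,
      forall (N d : nat) i, inP v N%:Z (cd i (y (N + d)%N - y N))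
    & forall N : nat, inP vE N%:Z (x - y N)].
Proof.
move=> hA x hx.
have [g gP] : exists g : E -> E,
    forall z, inO vE z -> in_lat k (g z) /\ inP vE 1 (z - g z).
  apply: (choice (fun z y => inO vE z -> in_lat k y /\ inP vE 1 (z - y))) => z.
  have [hz|hz] := classic (inO vE z); last by exists 0.
  by have [y hy e] := hA z hz; exists y.
pose xs := fix xs N := if N is N'.+1 then w^-1 *: (xs N' - g (xs N')) else x.
have xsO N : inO vE (xs N).
  elim: N => [|N IH] //=; have [_ e] := gP _ IH.
  have := inPZ (_ : inP v (-1) w^-1) e; rewrite addNr; apply.
  by right; rewrite dvalV // Hw.
pose y N := \sum_(j < N) w ^+ j *: g (xs j).
have xE N : x = y N + w ^+ N *: xs N.
  elim: N => [|N IH]; first by rewrite /y big_ord0 expr0 scale1r add0r.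
  rewrite /y big_ord_recr /= -/(y N) {1}IH -addrA; congr (_ + _).
  by rewrite scalerA exprSr -mulrA mulfV // mulr1 scalerBr addrC subrK.
exists y; split.
- move=> N i ki; rewrite linear_sum big1 // => j _; rewrite linearZ /=.
  by have [/(_ i)[_ ->]] := gP _ (xsO j); rewrite ?mulr0.
- move=> N; elim=> [|d IH] i; first by rewrite addn0 subrr linear0; left.
  rewrite addnS /y big_ord_recr /= -/(y (N + d)%N) -/(y N) addrAC linearD /= linearZ /=.
  apply: (inPD Hv (IH i)); have [/(_ i)[o _] _] := gP _ (xsO (N + d)%N).
  by apply: inPW (inPM Hv (inP_wX (N + d)) o); rewrite addr0 lez_nat leq_addr.
- move=> N; rewrite {1}(xE N) addrAC subrr add0r.
  by rewrite -[N%:Z]addr0; apply: inPZ (inP_wX N) (xsO N).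
Qed.

Lemma coord_high_eq0 k : (forall z, inO vE z -> approx_lat k z) ->
  forall x, inO vE x -> forall i : 'I_n, (k <= i)%N -> cd i x = 0.
Proof.
move=> hA x hx; have [y [y_high y_cauchy y_x]] := approx_expansion hA hx.
have [l hl] : exists l : 'I_n -> F,
    forall i (N j : nat), (N <= j)%N -> inP v N%:Z (cd i (y j) - l i).
  apply: (choice (fun i l => forall N j : nat, (N <= j)%N -> inP v N%:Z (cd i (y j) - l))).
  move=> i; apply: (v_complete_lim Hv Hcomp) => N d.
  by rewrite -linearB; apply: y_cauchy.
have x_comb : x = \sum_i l i *: pi ^+ i.
  apply/eqP; rewrite -subr_eq0; apply/eqP; apply: (@inP_eq0 _ vE) => N.
  rewrite -[x](subrK (y N)) -addrA; apply: (inPD HvE (y_x N)).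
  rewrite {1}(coord_expand (y N)) -sumrB; apply: (inP_sum HvE) => i _.
  by rewrite -scalerBl -[N%:Z]addr0; apply: inPZ (hl i N N (leqnn N)) (inO_piX i).
move=> i ki; rewrite x_comb coord_comb; apply: (@inP_eq0 _ v) => N.
by have := inPN Hv (hl i N N (leqnn N)); rewrite y_high // sub0r opprK.
Qed.

Lemma not_approx_lat_piX k : (k < n)%N -> ~ approx_lat k (pi ^+ k).
Proof.
move=> kn hk.
have := coord_high_eq0 (approx_lat_all (ltnW kn) hk) (inO_piX k) (i := Ordinal kn).
by rewrite (coord_piX (Ordinal kn)) eqxx leqnn => /(_ isT) /eqP; rewrite oner_eq0.
Qed.

Lemma approx_lat_of_relation (k : 'I_n) y :
  (forall i, inO v (cd i y)) -> (forall i : 'I_n, (k < i)%N -> inP v 1 (cd i y)) ->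
  cd k y != 0 -> v (cd k y) = 0 -> inP vE 1 y -> approx_lat k (pi ^+ k).
Proof.
move=> yO y_high a0 va y1; set a := cd k y in a0 va.
have aiO : inO v a^-1 by right; rewrite dvalV // va.
pose low := \sum_(i < n) (if (i < k)%N then - (a^-1 * cd i y) else 0) *: pi ^+ i.
pose high := \sum_(i < n) (if (k < i)%N then a^-1 * cd i y else 0) *: pi ^+ i.
exists low.
  move=> i; rewrite coord_comb; case: ifP => ik; last by split=> //; left.
  split=> [|ki]; first by have := inPN Hv (inOM Hv aiO (yO i)).
  by move: ik; rewrite ltnNge ki.
have -> : pi ^+ k - low = a^-1 *: y - high.
  apply: coord_inj => j; rewrite !linearB /= linearZ /= !coord_comb coord_piX.
  case: (ltngtP j k) => jk.
  - by rewrite -val_eqE /= gtn_eqF // mulrC subr0 sub0r opprK.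
  - by rewrite -val_eqE /= ltn_eqF // sub0r mulrC subrr oppr0.
  - by rewrite (val_inj jk) eqxx !subr0 mulVf.
apply: (inPB HvE); first by have := inPZ aiO y1; rewrite add0r.
apply: (inP_sum HvE) => j _; rewrite -[1]addr0; apply: inPZ (inO_piX j).
case: ifP => kj; last by left.
by have := inPM Hv aiO (y_high j kj); rewrite add0r.
Qed.

Lemma coord_inP1 y : (forall i, inO v (cd i y)) -> inP vE 1 y ->
  forall i, inP v 1 (cd i y).
Proof.
move=> yO y1 i; apply/inPP/negPn/negP => hi.
have [k k_bad k_max] := @arg_maxnP _ i
  (fun j => ~~ ((cd j y == 0) || (1 <= v (cd j y)))) val hi.
have [a0 va] : cd k y != 0 /\ v (cd k y) = 0.
  by apply: (unit_val (yO k)); move/inPP; apply/negP.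
apply: (not_approx_lat_piX (ltn_ord k)).
apply: approx_lat_of_relation yO _ a0 va y1 => j kj.
by apply/inPP/negPn/negP => hj; have := k_max j hj; rewrite /= leqNgt kj.
Qed.

(* The valuation of [x] is the least valuation of its coordinates: rescale by
   a coordinate of least valuation and apply [coord_inP1]. *)
Lemma inP_coord (t : int) x : inP vE t x -> forall i, inP v t (cd i x).
Proof.
move=> hx; have [->|x0] := eqVneq x 0; first by move=> i; rewrite linear0; left.
have /existsP[i0 ci0] : [exists i, cd i x != 0].
  apply: contraNT x0 => /existsPn h; apply/eqP/coord_inj => i.
  by rewrite linear0; apply/eqP; rewrite -[_ == _]negbK h.
have [i1 a0 a_min] := @arg_minP _ _ _ i0 (fun i => cd i x != 0)
  (fun i => v (cd i x)) ci0.
set a := cd i1 x in a0 a_min.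
have [t_le|lt_t] := leP t (v a).
  move=> i; have [->|c0] := eqVneq (cd i x) 0; first by left.
  by right; apply: le_trans t_le (a_min i c0).
exfalso; apply: (not_inP1 Hv ltr01).
have := @coord_inP1 (a^-1 *: x) _ _ i1; rewrite linearZ /= mulVf //; apply.
  move=> j; rewrite linearZ /=; have [->|c0] := eqVneq (cd j x) 0.
    by rewrite mulr0; left.
  right; rewrite dvalM ?invr_neq0 // dvalV //.
  by move: (a_min j c0); move: (v a) (v (cd j x)) => p q; lia.
have a_inv : inP v (- v a) a^-1 by right; rewrite dvalV.
apply: inPW (inPZ a_inv hx).
by move: lt_t; move: (v a) => p; lia.
Qed.

Lemma unit_last_coord z : z != 0 -> vE z = 0 ->
  exists j : 'I_n, ~ inP v 1 (cd lst (z * pi ^+ j)).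
Proof.
move=> z0 vz; apply: not_all_not_ex => all_p.
have h (j : 'I_n) : inP v 1 (cd lst (z * pi ^+ j)) by apply: NNPP; apply: all_p.
have [c cO piE] : exists2 c : 'I_n -> F, forall j, inO v (c j) &
    pi ^+ n.-1 = \sum_j c j *: (z * pi ^+ j).
  exists (fun j => cd j (z^-1 * pi ^+ n.-1)).
    move=> j; apply: inP_coord; right.
    rewrite dvalM ?invr_neq0 ?expf_neq0 ?pi_neq0 // dvalV // vz.
    by rewrite dvalX ?pi_neq0 // dval_pi mulr0 oppr0 addr0.
  rewrite -[LHS](mulVKf z0) {1}(coord_expand (z^-1 * _)) mulr_sumr.
  by apply: eq_bigr => j _; rewrite scalerAr.
apply: (not_inP1 Hv ltr01).
have := congr1 (coord X lst) piE; rewrite (coord_piX lst lst) eqxx /= mulr1n => ->.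
rewrite linear_sum; apply: (inP_sum Hv) => j _; rewrite linearZ /=.
by have := inPM Hv (cO j) (h j); rewrite add0r.
Qed.

Lemma inP_of_last_coords (r : int) z :
  (forall j : 'I_n, inP v r (cd lst (z * pi ^+ j))) -> inP vE r z.
Proof.
move=> h; have [->|z0] := eqVneq z 0; first by left.
have [s s0 vs] := exists_val Hv (- vE z) Hw0 Hw.
have sz0 : s *: z != 0 by rewrite scaler_eq0 negb_or s0.
have vsz : vE (s *: z) = 0.
  by rewrite -mulr_algl dvalM ?alg_neq0 // HvEc // vs addNr.
have [j hj] := unit_last_coord sz0 vsz.
move: hj; rewrite -scalerAl linearZ /=.
have [->|c0] := eqVneq (cd lst (z * pi ^+ j)) 0; first by rewrite mulr0; case; left.
move=> hj; right; have := inP_val (h j) c0.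
have : ~ (1 <= v (s * cd lst (z * pi ^+ j))) by move=> h1; apply: hj; right.
by rewrite dvalM // vs; move: (v _) (vE z) => p q; lia.
Qed.


Local Notation M := (Emat n m w beta).
Local Notation fst := (ifirst n_gt0).

Lemma Emat1 : M 1 = 1%:M.
Proof. by apply/matrixP => i j; rewrite Emat_coord mul1r coord_piX !mxE eq_sym. Qed.

Lemma EmatB x y : M (x - y) = M x - M y.
Proof. by apply/matrixP => i j; rewrite !mxE mulrBl linearB. Qed.

Lemma Emat_inP (t : int) x : inP vE t x -> mx_inP v t (M x).
Proof.
move=> hx i j; rewrite Emat_coord; apply: inP_coord.
by have := inPM HvE hx (inO_piX j); rewrite addr0.
Qed.

Lemma Emat_mul_Ur r x u : inP vE r%:Z (x - 1) -> Ur v r u -> Ur v r (M x *m u).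
Proof.
move=> hx hu; apply: (mx_inP_mul_sub1 Hv _ _ hu).
  by apply: Emat_inP; apply: (inO_of_sub1 HvE _ hx).
by rewrite -Emat1 -EmatB; apply: Emat_inP.
Qed.

(* [x] is determined by the last row of [M x], and a perturbation [u] in [U^1]
   only moves that row one step deeper than the valuation of [x]. *)
Lemma inP_of_last_row (r : int) x u : mx_inP v 1 (u - 1%:M) ->
  (forall j, inP v r ((M x *m u) lst j)) -> inP vE r x.
Proof.
move=> hu hr; have [->|x0] := eqVneq x 0; first by left.
have [//|lt_r] := leP r (vE x); first by right.
have hx1 : inP vE (vE x + 1) x.
  apply: inP_of_last_coords => j; rewrite -Emat_coord.
  have hA : inP v (vE x + 1) ((M x *m u) lst j).
    by apply: inPW (hr j); move: lt_r; move: (vE x) => p; lia.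
  have hB : inP v (vE x + 1) ((M x *m (u - 1%:M)) lst j).
    by apply: (mx_inPM Hv (Emat_inP _) hu); right.
  rewrite (_ : M x = M x *m u - M x *m (u - 1%:M)); last first.
    by rewrite mulmxBr mulmx1 opprB addrC subrK.
  by move: (M x *m u) (M x *m (u - 1%:M)) hA hB => A B hA hB; rewrite !mxE; apply: inPB.
by have := inP_val hx1 x0; move: (vE x) => p; lia.
Qed.

Lemma inP_sub1_of_last_row (r : nat) x u : (1 <= r)%N -> Ur v r u ->
  (forall j, inP v r%:Z ((M x *m u - 1%:M) lst j)) -> inP vE r%:Z (x - 1).
Proof.
move=> r_gt0 hu hr; apply: (@inP_of_last_row _ _ u).
  by apply: mx_inPW hu; rewrite lez_nat.
move=> j; rewrite EmatB Emat1 mulmxBl mul1mx.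
have := hu lst j; have := hr j; move: (M x *m u) => A; rewrite !mxE => hA hu1.
by have := inPB Hv hA hu1; rewrite opprB addrA subrK.
Qed.

Lemma Kprime_Emat_sub1 (r : nat) x u : (1 <= r <= m + 1)%N -> Ur v r u ->
  (forall j, inP v (m + 1)%N ((M x *m u - 1%:M) lst j)) -> inP vE r%:Z (x - 1).
Proof.
move=> /andP[r_gt0 r_le] hu hg; apply: inP_sub1_of_last_row r_gt0 hu _ => j.
by apply: inPW (hg j); rewrite lez_nat.
Qed.

(* The first column of [M x] lists the coordinates of [x], since [pi ^ 0 = 1]. *)
Lemma Un_Emat_sub1 (r : nat) x u : inO vE x -> Ur v r u -> Un (M x *m u) ->
  inP vE r%:Z (x - 1).
Proof.
move=> xO hu Uxu; apply: inP_of_coord => i.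
have -> : cd i (x - 1) = (M x - 1%:M) i fst.
  by rewrite -Emat1 -EmatB Emat_coord /= expr0 mulr1.
have h0 := Un_first_col n_gt0 i Uxu.
have := mx_inPM Hv (Emat_inP xO) hu i fst; rewrite add0r => h1.
rewrite (_ : M x - 1%:M = (M x *m u - 1%:M) - M x *m (u - 1%:M)); last first.
  by rewrite mulmxBr mulmx1 opprB [RHS]addrC addrA subrK.
move: (M x *m u - 1%:M) (M x *m (u - 1%:M)) h0 h1 => A B h0 h1.
by rewrite !mxE h0 sub0r; apply: inPN.
Qed.

Lemma OnePE_Emat1 : OnePE vE m w beta (M 1).
Proof. by exists 1; rewrite subrr; split=> //; left. Qed.

Lemma H1_of_Ur (u : 'M[F]_n) : Ur v (m./2 + 1) u -> H1 v vE m w beta u.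
Proof. by move=> hu; exists (M 1), u; rewrite {2}Emat1 mul1mx; split=> //; apply: OnePE_Emat1. Qed.

Lemma J1_of_Ur (u : 'M[F]_n) : Ur v m.+1./2 u -> J1 v vE m w beta u.
Proof. by move=> hu; exists (M 1), u; rewrite {2}Emat1 mul1mx; split=> //; apply: OnePE_Emat1. Qed.

Lemma H1_cap_Kprime (g : 'M[F]_n) :
  (H1 v vE m w beta g /\ Kprime v w m g) <-> (Ur v (m./2 + 1) g /\ Kprime v w m g).
Proof.
have [r_le _ r_gt0] := half_bounds m_gt0.
split=> -[hg hK]; split=> //; last exact: H1_of_Ur.
case: hg hK => _ [u [[x [_ ->]] [hu ->]]] hK.
apply: Emat_mul_Ur (Kprime_Emat_sub1 _ hu (Kprime_last_row Hv n_gt0 Hw0 Hw hK)) hu.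
by rewrite r_gt0.
Qed.

Lemma UnJ1H1_cap_Kprime (g : 'M[F]_n) :
  ((exists a h, (Un a /\ J1 v vE m w beta a) /\ H1 v vE m w beta h /\ g = a *m h)
     /\ Kprime v w m g) <->
  ((exists a u, (Un a /\ Ur v m.+1./2 a) /\ Ur v (m./2 + 1) u /\ g = a *m u)
     /\ Kprime v w m g).
Proof.
have [r_le s_gt0 r_gt0] := half_bounds m_gt0.
split=> -[[a [h [[Ua ha] [hh g_ah]]]] hK]; split=> //; exists a, h; last first.
  by split; [split=> //; apply: J1_of_Ur|split=> //; apply: H1_of_Ur].
split; [split=> //|split=> //].
  case: ha Ua => _ [u [[x [hx ->]] [hu ->]]] Ua.
  exact: Emat_mul_Ur (Un_Emat_sub1 (inO_of_sub1 HvE _ hx) hu Ua) hu.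
case: hh hK g_ah => _ [u [[x [_ ->]] [hu ->]]] hK g_ah.
apply: Emat_mul_Ur (Kprime_Emat_sub1 _ hu _) hu; first by rewrite r_gt0.
move=> j; have := Kprime_last_row Hv n_gt0 Hw0 Hw hK j.
by rewrite g_ah (Un_last_row n_gt0 _ _ Ua).
Qed.

Lemma Jbold_cap_Kprime (g : 'M[F]_n) :
  (Jbold v m w beta g /\ Kprime v w m g) <-> (J1 v vE m w beta g /\ Kprime v w m g).
Proof.
have [_ s_gt0 _] := half_bounds m_gt0.
split=> -[[_ [u [[x [hx ->]] [hu ->]]]] hK]; split=> //; exists (M x), u; last first.
  split=> //; exists x; split=> //; apply: contraPneq hx => ->.
  by rewrite sub0r; apply: (not_inPN1 HvE).
split=> //; exists x; split=> //.
apply: Kprime_Emat_sub1 (UrW s_gt0 hu) (Kprime_last_row Hv n_gt0 Hw0 Hw hK) => //.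
by rewrite leq_addl.
Qed.

Lemma minimax_intersections_unit : minimax_intersections v vE n m w beta.
Proof.
by split; [exact: H1_cap_Kprime|split; [exact: UnJ1H1_cap_Kprime|exact: Jbold_cap_Kprime]].
Qed.

End UnramifiedMinimax.

(* [v w = 1] does not exclude [w = 0], as [is_dval] says nothing about [v 0];
   then both sides of each identity are empty. *)
Section DegenerateUniformizer.
Variables (F : fieldType) (v : F -> int) (E : fieldExtType F) (vE : E -> int)
  (n m : nat) (beta : E).
Hypotheses (Hv : is_dval v) (n_gt1 : (1 < n)%N) (m_gt0 : (0 < m)%N).

Let n_gt0 : (0 < n)%N := ltnW n_gt1.
Local Notation M := (Emat n m 0 beta).
Local Notation fst := (ifirst n_gt0).
Local Notation lst := (ilast n_gt0).

Lemma Emat_w0 x i (j : 'I_n) : j != fst -> M x i j = 0.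
Proof.
rewrite -val_eqE /= => /negPf j0.
by rewrite Emat_coord expr0n (gtn_eqF m_gt0) scale0r mul0r expr0n j0 mulr0 linear0.
Qed.

Lemma w0_Kprime_Un_Ur (g a u : 'M[F]_n) : Kprime v 0 m g -> Un a -> Ur v 1 u ->
  g = a *m u -> False.
Proof.
move=> hK Ua hu g_au; have [g_col _] := Kprime_w0 Hv n_gt0 n_gt1 hK.
have := Ur_diag_neq0 Hv fst (leqnn 1) hu.
rewrite (_ : u = invmx a *m g); last by rewrite g_au mulKmx // Un_unitmx.
by rewrite mxE big1 ?eqxx // => k _; rewrite g_col mulr0.
Qed.

(* With [w = 0] every column of [M x] but the first vanishes, so the last row
   of [M x u] is a multiple of the first row of [u]. *)
Lemma w0_Kprime_Un_Emat (g a u : 'M[F]_n) x : Kprime v 0 m g -> Un a -> Ur v 1 u ->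
  g = a *m (M x *m u) -> False.
Proof.
move=> hK Ua hu g_axu; have [g_col g_ll] := Kprime_w0 Hv n_gt0 n_gt1 hK.
have u_ff := Ur_diag_neq0 Hv fst (leqnn 1) hu.
have g_row j : g lst j = M x lst fst * u fst j.
  have := Un_last_row n_gt0 (M x *m u) j Ua; rewrite -g_axu.
  have := erefl ((M x *m u) lst j); rewrite {2}mxE (bigD1 fst) //= big1 ?addr0.
    move: (M x *m u) => h <-.
    by rewrite [(g - _) _ _]mxE [(h - _) _ _]mxE => /addIr.
  by move=> k k0; rewrite Emat_w0 // mul0r.
move: g_ll; rewrite g_row; have := g_col lst; rewrite g_row => /eqP.
by rewrite mulf_eq0 (negPf u_ff) orbF => /eqP ->; rewrite mul0r eqxx.
Qed.

Lemma minimax_intersections_w0 : minimax_intersections v vE n m 0 beta.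
Proof.
have [_ s_gt0 r_gt0] := half_bounds m_gt0.
split; [|split] => g; split=> -[hg hK]; exfalso.
- case: hg => _ [u [[x [_ ->]] [hu g_xu]]].
  by move: g_xu; rewrite -[M x *m u]mul1mx; apply: (w0_Kprime_Un_Emat hK (@Un1 F n) (UrW r_gt0 hu)).
- by apply: (w0_Kprime_Un_Ur hK (@Un1 F n) (UrW r_gt0 hg)); rewrite mul1mx.
- case: hg => a [_ [[Ua _] [[_ [u [[x [_ ->]] [hu ->]]]] g_ah]]].
  exact: (w0_Kprime_Un_Emat hK Ua (UrW r_gt0 hu) g_ah).
- case: hg => a [u [[Ua _] [hu g_au]]].
  exact: (w0_Kprime_Un_Ur hK Ua (UrW r_gt0 hu) g_au).
- case: hg => _ [u [[x [_ ->]] [hu g_xu]]].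
  by move: g_xu; rewrite -[M x *m u]mul1mx; apply: (w0_Kprime_Un_Emat hK (@Un1 F n) (UrW s_gt0 hu)).
- case: hg => _ [u [[x [_ ->]] [hu g_xu]]].
  by move: g_xu; rewrite -[M x *m u]mul1mx; apply: (w0_Kprime_Un_Emat hK (@Un1 F n) (UrW s_gt0 hu)).
Qed.

End DegenerateUniformizer.

Theorem lemma6p5
  (F : fieldType) (v : F -> int) (w : F)
  (E : fieldExtType F) (vE : E -> int) (n m : nat) (beta : E) :
  nonarch_local_field v -> v w = 1 ->
  (2 <= n)%N -> (1 <= m)%N ->
  \dim {: E} = n -> is_dval vE ->
  (forall c : F, c != 0 -> vE c%:A = v c) ->
  (<< 1%VS; beta >>)%VS = fullv ->
  beta != 0 -> vE beta = - (m%:Z) ->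
  (forall x : E, inO vE x -> exists s : seq F, (forall c, c \in s -> inO v c) /\
      inP vE 1 (x - \sum_(i < size s) (s`_i)%:A * ((w ^+ m)%:A * beta) ^+ i)) ->
  (forall g : 'M[F]_n,
     (H1 v vE m w beta g /\ Kprime v w m g) <-> (Ur v (m./2 + 1) g /\ Kprime v w m g)) /\
  (forall g : 'M[F]_n,
     ((exists a h, (Un a /\ J1 v vE m w beta a) /\ H1 v vE m w beta h /\ g = a *m h)
        /\ Kprime v w m g) <->
     ((exists a u, (Un a /\ Ur v (m.+1)./2 a) /\ Ur v (m./2 + 1) u /\ g = a *m u)
        /\ Kprime v w m g)) /\
  (forall g : 'M[F]_n,
     (Jbold v m w beta g /\ Kprime v w m g) <-> (J1 v vE m w beta g /\ Kprime v w m g)).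
Proof.
move=> [Hv Hcomp _] Hw Hn Hm HdimE HvE HvEc Hgen Hb0 Hvb Hres.
have [->|w0] := eqVneq w 0; first exact: minimax_intersections_w0.
exact: (minimax_intersections_unit Hv Hcomp Hw w0 HdimE HvE HvEc Hgen Hb0 Hvb (ltnW Hn) Hm Hres).
Qed.
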